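(* Let $X\subseteq[U]$ be a set of $k$ keys. Let $p>4U^2$ be a prime and $m\le U$ a positive integer, and let $h(x)=((\sigma x+\tau)\bmod p)\bmod m$ where $\sigma,\tau\in[p]$ are chosen independently and uniformly at random. Fix a key $x\notin X$ and buckets $a,b\in[m]$. Let $y,z\in X$ be chosen independently and uniformly at random (independently of $h$). Then $$\Pr\big(h(y)=h(z)=b \;\big|\; h(x)=a\big)\le \frac{1}{m^2}+O\!\left(\frac{U\log U}{mk^2}\right).$$
   Context: $[N]=\{0,1,\dots,N-1\}$. The probability is over the joint randomness of $\sigma,\tau,y,z$. The $O(\cdot)$ hides an absolute constant. *)

From Stdlib Require Import Reals.
From mathcomp Require Import all_boot.

Definition hfun (p m s t x : nat) : nat := ((s * x + t) %% p) %% m.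

(* Sample space: (sigma, tau, y, z) in [p] x [p] x [U] x [U], uniform,
   restricted to y, z in X (i.e. y, z uniform in X, independent of h). *)
Definition cond_count (U p m : nat) (X : {set 'I_U}) (x : 'I_U) (a : nat) : nat :=
  #|[set q : 'I_p * 'I_p * 'I_U * 'I_U |
      [&& hfun p m q.1.1.1 q.1.1.2 x == a, q.1.2 \in X & q.2 \in X]]|.

Definition joint_count (U p m : nat) (X : {set 'I_U}) (x : 'I_U) (a b : nat) : nat :=
  #|[set q : 'I_p * 'I_p * 'I_U * 'I_U |
      [&& hfun p m q.1.1.1 q.1.1.2 x == a, q.1.2 \in X, q.2 \in X,
          hfun p m q.1.1.1 q.1.1.2 q.1.2 == b & hfun p m q.1.1.1 q.1.1.2 q.2 == b]]|.

Definition cond_prob (U p m : nat) (X : {set 'I_U}) (x : 'I_U) (a b : nat) : R :=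
  Rdiv (INR (joint_count U p m X x a b)) (INR (cond_count U p m X x a)).

(* Fix keys y, z other than x and write y - x = t g, z - x = s g with g = gcd(|y - x|, |z - x|),
   gcd(t, s) = 1 and |s| <= |t|.  Conditioning on h(x) = a fixes u = (sigma x + tau) mod p in the
   residue class of a; h(y) = h(z) = b means v = (sigma y + tau) mod p = m j + b and
   w = (sigma z + tau) mod p = m l + b.  Eliminating sigma and tau gives t (w - u) = s (v - u)
   (mod p), so for fixed u the point (j, l) of the (p/m)-square lies on the line
   t l - s j = c(u) (mod p), which carries about p/m^2 + 2p/(m |t|) lattice points.  As
   (sigma, tau) is determined by (u, v), the event has at most p #A (1/m^2 + 2g/(m |y - x|)) seeds
   against p #A for the condition alone.  Averaging over y, z in X leaves the error term
   (2/(m k^2)) sum gcd/max of the distances to x; charging each gcd to the common divisors of the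
   larger distance, and using that a distance has at most two preimages, this sum is at most
   8 U H_U = O(U log U). *)

From Stdlib Require Import Reals ZArith Lia.
From Stdlib Require Znumtheory.
From mathcomp Require Import all_boot all_order all_algebra.
From mathcomp Require Import zify ring lra.
From mathcomp Require Import Rstruct.

Set Implicit Arguments.
Unset Strict Implicit.
Unset Printing Implicit Defensive.

Import Order.TTheory GRing.Theory Num.Theory.

Section IntegerFacts.
Local Open Scope Z_scope.

Lemma Zprime_of_prime (p : nat) : prime p -> Znumtheory.prime (Z.of_nat p).
Proof.
move=> p_prime; apply/Znumtheory.prime_alt; split; first by have := prime_gt1 p_prime; lia.
move=> n n_bounds [k def_p].
have /primeP[_ /(_ (Z.to_nat n))] := p_prime.
have -> : (Z.to_nat n %| p)%N by apply/dvdnP; exists (Z.to_nat k); nia.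
by move=> /(_ isT) /pred2P; lia.
Qed.

Lemma Zdivide_small (t d : Z) : (t | d) -> Z.abs d < Z.abs t -> d = 0.
Proof.
move=> t_d lt_dt; case: (Z.eq_dec d 0) => // d_neq0.
by have := Znumtheory.Zdivide_bounds _ _ t_d d_neq0; lia.
Qed.

Lemma Zprime_divide_mul_small (p : nat) (c y : Z) : prime p ->
  0 < Z.abs c < Z.of_nat p -> (Z.of_nat p | c * y) -> (Z.of_nat p | y).
Proof.
move=> p_prime c_bounds /(Znumtheory.prime_mult _ (Zprime_of_prime p_prime))[] //.
by move/Zdivide_small; lia.
Qed.

Lemma Zdiv_eq_divide_sub (P y1 y2 : Z) : 0 < P ->
  y1 / P = y2 / P -> (P | y1 - y2) -> y1 = y2.
Proof.
move=> P_gt0 eq_div /Zdivide_small.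
have := Z.mod_pos_bound y1 P P_gt0; have := Z.mod_pos_bound y2 P P_gt0.
have := Z.div_mod y1 P; have := Z.div_mod y2 P; rewrite eq_div.
lia.
Qed.

Lemma Zdivide_of_eq_modn (p A B : nat) : A = B %[mod p] ->
  (Z.of_nat p | Z.of_nat A - Z.of_nat B).
Proof.
move=> eq_mod; exists (Z.of_nat (A %/ p) - Z.of_nat (B %/ p)).
have := divn_eq A p; have := divn_eq B p; rewrite eq_mod; lia.
Qed.

Lemma Z_of_nat_gcdn (a b : nat) : Z.of_nat (gcdn a b) = Z.gcd (Z.of_nat a) (Z.of_nat b).
Proof. by lia. Qed.

Lemma Zgcd_cofactors (a b : Z) : a <> 0 ->
  exists ta tb, [/\ a = ta * Z.gcd a b, b = tb * Z.gcd a b & Z.gcd ta tb = 1].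
Proof.
move=> a_neq0; have g_neq0 : Z.gcd a b <> 0 by move/Z.gcd_eq_0; lia.
case: (Z.gcd_divide_l a b) (Z.gcd_divide_r a b) => ta def_a [tb def_b].
exists ta, tb; split => //; move: (Z.gcd_div_gcd a b _ g_neq0 erefl).
by set g := Z.gcd a b in def_a def_b *; rewrite {1}def_a {1}def_b !Z.div_mul.
Qed.

Lemma Zdivide_sub_modn (n p : nat) : (Z.of_nat p | Z.of_nat n - Z.of_nat (n %% p)).
Proof. by exists (Z.of_nat (n %/ p)); have := divn_eq n p; lia. Qed.

Lemma affine_three_point (P s t x y z u v w ty tz g : Z) :
  (P | s * x + t - u) -> (P | s * y + t - v) -> (P | s * z + t - w) ->
  y - x = ty * g -> z - x = tz * g -> (P | ty * (w - u) - tz * (v - u)).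
Proof.
move=> div_u div_v div_w def_y def_z.
have -> : ty * (w - u) - tz * (v - u) =
    (ty - tz) * (s * x + t - u) + tz * (s * y + t - v) - ty * (s * z + t - w).
  have -> : y = x + ty * g by lia.
  have -> : z = x + tz * g by lia.
  ring.
by apply: Z.divide_sub_r; first apply: Z.divide_add_r; apply: Z.divide_mul_r.
Qed.

End IntegerFacts.

Lemma affine_hash_inj (p x y : nat) (s1 t1 s2 t2 : 'I_p) :
  prime p -> (x < p)%N -> (y < p)%N -> x != y ->
  s1 * x + t1 = s2 * x + t2 %[mod p] -> s1 * y + t1 = s2 * y + t2 %[mod p] ->
  (s1, t1) = (s2, t2).
Proof.
move=> p_prime x_lt y_lt x_neq_y /Zdivide_of_eq_modn div_x /Zdivide_of_eq_modn div_y.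
have s1_lt := ltn_ord s1; have s2_lt := ltn_ord s2.
have t1_lt := ltn_ord t1; have t2_lt := ltn_ord t2.
have div_s : Z.divide (Z.of_nat p) ((Z.of_nat y - Z.of_nat x) * (Z.of_nat s1 - Z.of_nat s2)).
  have := Z.divide_sub_r _ _ _ div_y div_x.
  by rewrite !Nat2Z.inj_add !Nat2Z.inj_mul; congr Z.divide; ring.
have /Zdivide_small eq_s : Z.divide (Z.of_nat p) (Z.of_nat s1 - Z.of_nat s2).
  by apply: Zprime_divide_mul_small div_s => //; move/eqP: x_neq_y; lia.
have {}eq_s : s1 = s2 by apply: ord_inj; apply: Nat2Z.inj; have := eq_s; lia.
subst s2; move: div_x; rewrite !Nat2Z.inj_add Z.add_add_simpl_l_l => /Zdivide_small.
by move=> eq_t; congr pair; apply: ord_inj; apply: Nat2Z.inj; have := eq_t; lia.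
Qed.

Definition residue_class (p m a : nat) : {set 'I_p} := [set u : 'I_p | u %% m == a].

Lemma card_hash_fibre (p m x a : nat) : (0 < p)%N ->
  #|[set st : 'I_p * 'I_p | hfun p m st.1 st.2 x == a]| = (p * #|residue_class p m a|)%N.
Proof.
move=> p_gt0.
pose f (st : 'I_p * 'I_p) := (st.1, Ordinal (ltn_pmod (st.1 * x + st.2) p_gt0)).
have f_inj : injective f.
  move=> [s1 t1] [s2 t2] [] /= <- /eqP.
  rewrite eqn_modDl !modn_small ?ltn_ord // => /eqP t_eq.
  by congr pair; apply: ord_inj.
transitivity #|setX [set: 'I_p] (residue_class p m a)|.
  rewrite -[RHS](card_preimset _ f_inj).
  by apply: eq_card => -[s t]; rewrite !inE /hfun.
by rewrite cardsX cardsT card_ord.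
Qed.

Section LatticeCount.
Local Open Scope Z_scope.

Lemma Zmul_range (t l L : Z) : 0 <= l <= L ->
  Z.min 0 (t * L) <= t * l <= Z.min 0 (t * L) + Z.abs t * L.
Proof.
by move=> l_range; case: (Z.abs_spec t) => -[t_sign ->];
  case: (Z.min_spec 0 (t * L)) => -[? ->]; nia.
Qed.

Lemma coprime_lin_comb_inj (t s l1 l2 e1 e2 : Z) :
  Z.gcd t s = 1 -> Z.abs (e1 - e2) < Z.abs t ->
  t * l1 + s * e1 = t * l2 + s * e2 -> e1 = e2 /\ l1 = l2.
Proof.
move=> coprime_ts lt_e eq_comb.
have t_div : (t | s * (e2 - e1)) by exists (l1 - l2); lia.
have /Zdivide_small : (t | e2 - e1).
  exact: Znumtheory.Gauss t_div (proj1 (Znumtheory.Zgcd_1_rel_prime _ _) coprime_ts).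
move=> /(_ ltac:(lia)) eq_e; split; first by lia.
have : t * (l1 - l2) = 0 by lia.
by case/Z.mul_eq_0 => ?; lia.
Qed.

Variables (p m J E K : nat) (t s : Z).
Hypotheses (p_prime : prime p) (m_gt0 : (0 < m)%N) (m_lt_p : (m < p)%N).
Hypotheses (abs_t : Z.abs t = Z.of_nat E.+1) (coprime_ts : Z.gcd t s = 1).
Hypothesis range_lt :
  Z.of_nat E.+1 * Z.of_nat J + Z.abs s * Z.of_nat E < Z.of_nat p * Z.of_nat K.+1.

Variables (T V : finType) (S : {set T}) (A : {set V}) (B : V -> Z).
Variables (u : T -> V) (j l : T -> nat).
Hypothesis u_in : {in S, forall q, u q \in A}.
Hypothesis jl_le : {in S, forall q, (j q <= J)%N /\ (l q <= J)%N}.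
Hypothesis on_line : {in S, forall q,
  (Z.of_nat p | B (u q) + Z.of_nat m * (t * Z.of_nat (l q) - s * Z.of_nat (j q)))}.
Hypothesis ujl_inj : {in S &, injective (fun q => (u q, j q, l q))}.

Let p_gt0 : 0 < Z.of_nat p.
Proof. by have := prime_gt0 p_prime; lia. Qed.

Let height q (e : nat) :=
  t * Z.of_nat (l q) + s * Z.of_nat e - (Z.min 0 (t * Z.of_nat J) + Z.min 0 (s * Z.of_nat E)).

Let height_range q e : q \in S -> (e <= E)%N -> 0 <= height q e < Z.of_nat p * Z.of_nat K.+1.
Proof.
move=> /jl_le[_ l_le] e_le.
have l_range : 0 <= Z.of_nat (l q) <= Z.of_nat J by lia.
have e_range : 0 <= Z.of_nat e <= Z.of_nat E by lia.
by have := Zmul_range t l_range; have := Zmul_range s e_range; rewrite /height; lia.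
Qed.

Let height_divide q1 q2 e1 e2 : q1 \in S -> q2 \in S ->
  u q1 = u q2 -> (j q1 + e1 = j q2 + e2)%N -> (Z.of_nat p | height q1 e1 - height q2 e2).
Proof.
move=> S1 S2 eq_u eq_j; apply: (@Zprime_divide_mul_small _ (Z.of_nat m)) => //; first by lia.
have := Z.divide_sub_r _ _ _ (on_line S1) (on_line S2).
have -> : Z.of_nat (j q1) = Z.of_nat (j q2) + Z.of_nat e2 - Z.of_nat e1 by lia.
by rewrite eq_u; congr Z.divide; rewrite /height; ring.
Qed.

Let shifted_inj q1 q2 e1 e2 : q1 \in S -> q2 \in S -> (e1 <= E)%N -> (e2 <= E)%N ->
  u q1 = u q2 -> (j q1 + e1 = j q2 + e2)%N ->
  height q1 e1 / Z.of_nat p = height q2 e2 / Z.of_nat p -> q1 = q2 /\ e1 = e2.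
Proof.
move=> S1 S2 e1_le e2_le eq_u eq_j eq_quot.
have /Zdiv_eq_divide_sub eq_height := height_divide S1 S2 eq_u eq_j.
have eq_comb : t * Z.of_nat (l q1) + s * Z.of_nat e1 = t * Z.of_nat (l q2) + s * Z.of_nat e2.
  by have := eq_height p_gt0 eq_quot; rewrite /height; lia.
have [|eq_e eq_l] := coprime_lin_comb_inj coprime_ts _ eq_comb; first by lia.
have {}eq_e : e1 = e2 by lia.
subst e2; split=> //; apply: ujl_inj => //=.
by congr (_, _, _); [exact: eq_u | lia | lia].
Qed.

(* Each q is counted E + 1 times through (u q, j q + e, height q e / p) for e <= E.  These images
   are distinct: by on_line, t l + s e is fixed modulo p by u q and j q + e, hence fixed by the
   quotient, and then coprimality with e < |t| recovers e and l q. *)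
Lemma card_lattice_lines : (#|S| * E.+1 <= #|A| * (J + E).+1 * K.+1)%N.
Proof.
pose G (qe : T * 'I_E.+1) : V * 'I_(J + E).+1 * 'I_K.+1 :=
  (u qe.1, inord (j qe.1 + qe.2)%N, inord (Z.to_nat (height qe.1 qe.2 / Z.of_nat p))).
have quot_lt q e : q \in S -> (e <= E)%N -> (Z.to_nat (height q e / Z.of_nat p) < K.+1)%N.
  move=> q_in e_le; have := height_range q_in e_le.
  by case=> /(Z.div_pos _ _)/(_ p_gt0) ? /(Z.div_lt_upper_bound _ _ _ p_gt0); lia.
have G_inj : {in setX S [set: 'I_E.+1] &, injective G}.
  move=> [q1 e1] [q2 e2] /setXP[S1 _] /setXP[S2 _] [] /= eq_u.
  have e1_le : (e1 <= E)%N by rewrite -ltnS.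
  have e2_le : (e2 <= E)%N by rewrite -ltnS.
  have /jl_le[j1_le _] := S1; have /jl_le[j2_le _] := S2.
  have j1_lt : (j q1 + e1 < (J + E).+1)%N by lia.
  have j2_lt : (j q2 + e2 < (J + E).+1)%N by lia.
  move=> /(congr1 val); rewrite /= !inordK // => eq_j.
  move=> /(congr1 val); rewrite /= !inordK ?quot_lt // => /Z2Nat.inj eq_quot.
  have [h1_ge0 _] := height_range S1 e1_le; have [h2_ge0 _] := height_range S2 e2_le.
  move: (eq_quot (Z.div_pos _ _ h1_ge0 p_gt0) (Z.div_pos _ _ h2_ge0 p_gt0)).
  by case/(shifted_inj S1 S2 e1_le e2_le eq_u eq_j) => <- /ord_inj <-.
have G_sub : G @: setX S [set: 'I_E.+1] \subset setX (setX A [set: 'I_(J + E).+1]) [set: 'I_K.+1].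
  by apply/subsetP => _ /imsetP[[q e] /setXP[/u_in uA _] ->]; rewrite !inE uA.
have := subset_leq_card G_sub.
by rewrite (card_in_imset G_inj) !cardsX !cardsT !card_ord.
Qed.

End LatticeCount.

Lemma lattice_count_arith (p m U E J K : nat) :
  (m <= U)%N -> (E < U)%N -> (4 * U ^ 2 < p)%N ->
  (m * J <= p)%N -> (p * K <= E * (J + E))%N ->
  (m ^ 2 * (J + E) * K.+1 <= p * (E + 2 * m))%N.
Proof.
move=> m_le E_lt p_large mJ_le pK_le.
set W := (m * (J + E))%N.
have W_le : (W <= p + m * E)%N by rewrite /W mulnDr leq_add2r.
have small : (2 * E ^ 2 * p + m * E ^ 3 + m * E * p <= p ^ 2)%N.
  have E2 : (E ^ 2 <= U ^ 2)%N by rewrite leq_exp2r //; lia.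
  have mE : (m * E <= U ^ 2)%N by rewrite expnS expn1 leq_mul //; lia.
  have mE3 : (m * E ^ 3 <= U ^ 2 * U ^ 2)%N.
    by rewrite -expnD (expnS U 3) leq_mul // leq_exp2r //; lia.
  nia.
suff : (p * (m ^ 2 * (J + E) * K.+1) <= p * (p * (E + 2 * m)))%N.
  by rewrite leq_pmul2l //; lia.
have -> : (p * (m ^ 2 * (J + E) * K.+1) = m * W * (p * K) + p * m * W)%N.
  by rewrite /W mulnS; ring.
have mWK : (m * W * (p * K) <= E * W ^ 2)%N.
  have -> : (E * W ^ 2 = m * W * (E * (J + E)))%N by rewrite /W; ring.
  by rewrite leq_mul2l pK_le orbT.
have EW : (E * W ^ 2 <= E * (p + m * E) ^ 2)%N by rewrite leq_mul2l leq_exp2r ?W_le ?orbT.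
have pmW : (p * m * W <= p * m * (p + m * E))%N by rewrite leq_mul2l W_le orbT.
have msmall : (m * (2 * E ^ 2 * p + m * E ^ 3 + m * E * p) <= m * p ^ 2)%N.
  by rewrite leq_mul2l small orbT.
lia.
Qed.

Definition event_set (p m x y z a b : nat) : {set 'I_p * 'I_p} :=
  [set st : 'I_p * 'I_p | [&& hfun p m st.1 st.2 x == a,
                              hfun p m st.1 st.2 y == b & hfun p m st.1 st.2 z == b]].

Lemma event_setC (p m x y z a b : nat) : event_set p m x y z a b = event_set p m x z y a b.
Proof. by apply/setP => st; rewrite !inE (andbC (hfun _ _ _ _ y == b)). Qed.

Section EventSet.
Local Open Scope Z_scope.
Variables (p m x y z a b : nat).
Hypotheses (p_prime : prime p) (m_gt0 : (0 < m)%N).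

Let p_gt0 : (0 < p)%N := prime_gt0 p_prime.
Let hval (n : nat) (st : 'I_p * 'I_p) : 'I_p := Ordinal (ltn_pmod (st.1 * n + st.2) p_gt0).

Lemma event_line_dvd (ty tz g : Z) (st : 'I_p * 'I_p) :
  st \in event_set p m x y z a b ->
  Z.of_nat y - Z.of_nat x = ty * g -> Z.of_nat z - Z.of_nat x = tz * g ->
  Z.divide (Z.of_nat p) ((ty - tz) * (Z.of_nat b - Z.of_nat (hval x st)) +
    Z.of_nat m * (ty * Z.of_nat (hval z st %/ m) - tz * Z.of_nat (hval y st %/ m))).
Proof.
case: st => s t; rewrite inE /hfun /hval /= => /and3P[_ /eqP v_mod /eqP w_mod] def_y def_z.
have line (n : nat) : Z.divide (Z.of_nat p)
    (Z.of_nat s * Z.of_nat n + Z.of_nat t - Z.of_nat ((s * n + t) %% p)).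
  by have := Zdivide_sub_modn (s * n + t) p; rewrite -plusE -multE Nat2Z.inj_add Nat2Z.inj_mul.
have := affine_three_point (line x) (line y) (line z) def_y def_z.
set u := ((s * x + t) %% p)%N; set v := ((s * y + t) %% p)%N; set w := ((s * z + t) %% p)%N.
have def_v : Z.of_nat v = Z.of_nat (v %/ m) * Z.of_nat m + Z.of_nat b.
  by rewrite {1}(divn_eq v m) v_mod -plusE -multE Nat2Z.inj_add Nat2Z.inj_mul.
have def_w : Z.of_nat w = Z.of_nat (w %/ m) * Z.of_nat m + Z.of_nat b.
  by rewrite {1}(divn_eq w m) w_mod -plusE -multE Nat2Z.inj_add Nat2Z.inj_mul.
by congr Z.divide; rewrite def_v def_w; ring.
Qed.

Lemma event_set_inj : (x < p)%N -> (y < p)%N -> y != x ->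
  {in event_set p m x y z a b &,
    injective (fun st => (hval x st, hval y st %/ m, hval z st %/ m)%N)}.
Proof.
move=> x_lt y_lt y_neq_x [s1 t1] [s2 t2]; rewrite !inE /hfun /=.
move=> /and3P[_ /eqP v1_mod _] /and3P[_ /eqP v2_mod _] [eq_u eq_v _].
have x_neq_y : x != y by rewrite eq_sym.
refine (affine_hash_inj p_prime x_lt y_lt x_neq_y eq_u _).
by rewrite (divn_eq ((s1 * y + t1) %% p) m) (divn_eq ((s2 * y + t2) %% p) m) eq_v v1_mod v2_mod.
Qed.

Lemma card_event_set_lines (J K E : nat) (ty tz g : Z) :
  (x < p)%N -> (y < p)%N -> y != x -> (m < p)%N ->
  Z.of_nat y - Z.of_nat x = ty * g -> Z.of_nat z - Z.of_nat x = tz * g ->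
  Z.gcd ty tz = 1 -> Z.abs ty = Z.of_nat E.+1 -> Z.abs tz <= Z.abs ty ->
  (p.-1 %/ m <= J)%N -> (E.+1 * (J + E) < p * K.+1)%N ->
  (#|event_set p m x y z a b| * E.+1 <= #|residue_class p m a| * (J + E).+1 * K.+1)%N.
Proof.
move=> x_lt y_lt y_neq_x m_lt def_y def_z coprime_t abs_ty abs_le J_ge K_gt.
have hval_le n st : (hval n st %/ m <= J)%N.
  by apply: leq_trans J_ge; apply: leq_div2r; have := ltn_ord (hval n st); lia.
apply: (@card_lattice_lines p m J E K ty tz p_prime m_gt0 m_lt abs_ty coprime_t _
  _ _ _ (residue_class p m a) (fun u => (ty - tz) * (Z.of_nat b - Z.of_nat u))
  (hval x) (fun st => hval y st %/ m)%N (fun st => hval z st %/ m)%N).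
- by nia.
- by move=> st; rewrite !inE => /and3P[hx _ _].
- by move=> st _; rewrite !hval_le.
- by move=> st st_in; apply: event_line_dvd st_in def_y def_z.
- exact: event_set_inj.
Qed.

End EventSet.

Section PairBound.
Local Open Scope Z_scope.

Lemma dist_gcd_cofactors (x y z : nat) : y != x -> (`|z - x| <= `|y - x|)%N ->
  exists ty tz, [/\ Z.of_nat y - Z.of_nat x = ty * Z.of_nat (gcdn `|y - x| `|z - x|),
    Z.of_nat z - Z.of_nat x = tz * Z.of_nat (gcdn `|y - x| `|z - x|),
    Z.gcd ty tz = 1, Z.abs tz <= Z.abs ty &
    Z.of_nat `|y - x| = Z.abs ty * Z.of_nat (gcdn `|y - x| `|z - x|)].
Proof.
move=> /eqP y_neq_x dz_le.
have [|ty [tz [def_y def_z coprime_t]]] :=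
  @Zgcd_cofactors (Z.of_nat y - Z.of_nat x) (Z.of_nat z - Z.of_nat x); first by lia.
have dist_y : Z.of_nat `|y - x| = Z.abs (Z.of_nat y - Z.of_nat x) by lia.
have dist_z : Z.of_nat `|z - x| = Z.abs (Z.of_nat z - Z.of_nat x) by lia.
have := Z.gcd_nonneg (Z.of_nat y - Z.of_nat x) (Z.of_nat z - Z.of_nat x).
rewrite Z_of_nat_gcdn dist_y dist_z Z.gcd_abs_l Z.gcd_abs_r.
move: (Z.gcd _ _) def_y def_z => g def_y def_z g_ge0.
have abs_y : Z.abs (Z.of_nat y - Z.of_nat x) = Z.abs ty * g.
  by rewrite def_y Z.abs_mul (Z.abs_eq _ g_ge0).
have abs_z : Z.abs (Z.of_nat z - Z.of_nat x) = Z.abs tz * g.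
  by rewrite def_z Z.abs_mul (Z.abs_eq _ g_ge0).
have g_gt0 : 0 < g by nia.
exists ty, tz; split=> //; apply: (proj2 (Z.mul_le_mono_pos_r _ _ _ g_gt0)).
by rewrite -abs_y -abs_z; lia.
Qed.

Lemma card_event_set (U p m x y z a b : nat) :
  prime p -> (4 * U ^ 2 < p)%N -> (0 < m)%N -> (m <= U)%N ->
  (x < U)%N -> (y < U)%N -> y != x -> (`|z - x| <= `|y - x|)%N ->
  (m ^ 2 * `|y - x| * #|event_set p m x y z a b| <=
     p * #|residue_class p m a| * (`|y - x| + 2 * m * gcdn `|y - x| `|z - x|))%N.
Proof.
move=> p_prime p_large m_gt0 m_le x_lt y_lt y_neq_x dz_le.
have [ty [tz [def_y def_z coprime_t abs_le dist_y]]] := dist_gcd_cofactors y_neq_x dz_le.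
move: (gcdn _ _) def_y def_z dist_y => G def_y def_z dist_y.
have [E abs_ty] : exists E, Z.abs ty = Z.of_nat E.+1.
  by exists (Z.to_nat (Z.abs ty)).-1; move/eqP: y_neq_x; lia.
have def_dy : `|y - x| = (E.+1 * G)%N by lia.
have U_lt_p : (U < p)%N by nia.
set J := (p.-1 %/ m)%N; set K := ((E.+1 * (J + E)) %/ p)%N.
have K_gt : (E.+1 * (J + E) < p * K.+1)%N by rewrite [(p * _)%N]mulnC ltn_ceil ?prime_gt0.
have lines := card_event_set_lines a b p_prime m_gt0 (ltn_trans x_lt U_lt_p)
  (ltn_trans y_lt U_lt_p) y_neq_x (leq_ltn_trans m_le U_lt_p)
  def_y def_z coprime_t abs_ty abs_le (leqnn J) K_gt.
have mJ_le : (m * J <= p)%N.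
  by rewrite mulnC; apply: leq_trans (leq_divM _ _) _; apply: leq_pred.
have pK_le : (p * K <= E.+1 * (J + E.+1))%N.
  by rewrite mulnC; apply: leq_trans (leq_divM _ _) _; rewrite leq_mul2l leq_add2l leqnSn orbT.
have E_lt : (E.+1 < U)%N.
  have dy_gt0 : (0 < `|y - x|)%N by move/eqP: y_neq_x; lia.
  have dy_lt : (`|y - x| < U)%N by lia.
  rewrite def_dy muln_gt0 /= in dy_gt0.
  by apply: leq_ltn_trans dy_lt; rewrite def_dy leq_pmulr.
have := lattice_count_arith m_le E_lt p_large mJ_le pK_le; rewrite addnS => arith.
set S := #|event_set p m x y z a b|; set A := #|residue_class p m a|.
rewrite def_dy (_ : m ^ 2 * (E.+1 * G) * S = G * m ^ 2 * (S * E.+1))%N; last by ring.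
apply: leq_trans (leq_mul (leqnn _) lines) _.
rewrite (_ : G * m ^ 2 * (A * (J + E).+1 * K.+1) = G * A * (m ^ 2 * (J + E).+1 * K.+1))%N;
  last by ring.
rewrite (_ : p * A * (E.+1 * G + 2 * m * G) = G * A * (p * (E.+1 + 2 * m)))%N; last by ring.
by rewrite leq_mul2l arith orbT.
Qed.

End PairBound.

Definition common_divisor_sum (n a c : nat) : nat :=
  \sum_(1 <= d < n | (d %| a) && (d %| c)) d.

Definition divisor_count (n a : nat) : nat := \sum_(1 <= d < n) (d %| a).

Lemma gcdn_le_common_divisor_sum (n a c : nat) :
  (0 < a < n)%N -> (gcdn a c <= common_divisor_sum n a c)%N.
Proof.
move=> /andP[a_gt0 a_lt]; have g_gt0 : (0 < gcdn a c)%N by rewrite gcdn_gt0 a_gt0.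
have g_lt : (gcdn a c < n)%N by apply: leq_ltn_trans (dvdn_leq a_gt0 (dvdn_gcdl a c)) a_lt.
rewrite /common_divisor_sum (big_rem (gcdn a c)) ?mem_index_iota ?g_gt0 ?g_lt //.
by rewrite dvdn_gcdl dvdn_gcdr leq_addr.
Qed.

Lemma sum_common_divisor_sum (n a : nat) :
  (\sum_(1 <= c < a.+1) common_divisor_sum n a c = a * divisor_count n a)%N.
Proof.
rewrite /common_divisor_sum /divisor_count big_distrr /=.
under eq_bigr do rewrite big_mkcond /=.
rewrite exchange_big; apply: eq_bigr => d _.
have [d_a | _] := boolP (d %| a); last by rewrite muln0 big1.
rewrite muln1 (eq_bigr (fun c => (d %| c) * d)%N) /=; last first.
  by move=> c _; case: (d %| c); rewrite ?mul1n.
by rewrite -big_distrl -divn_count_dvd; apply: divnK.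
Qed.

Lemma sum_divisor_count (n : nat) :
  (\sum_(1 <= a < n) divisor_count n a = \sum_(1 <= d < n) n.-1 %/ d)%N.
Proof.
rewrite /divisor_count exchange_big; apply: eq_bigr => d _.
by case: n => [|n]; [rewrite big_geq // div0n | rewrite divn_count_dvd].
Qed.

Section FibreSums.
Local Open Scope ring_scope.
Variables (R : numFieldType) (T : finType).

Lemma sum_le_fibres (X : {set T}) (f : T -> nat) (F : nat -> R) (lo hi k : nat) :
  (forall c, 0 <= F c) -> {in X, forall y, (lo <= f y < hi)%N} ->
  (forall c, #|[set y in X | f y == c]| <= k)%N ->
  \sum_(y in X) F (f y) <= k%:R * \sum_(lo <= c < hi) F c.
Proof.
move=> F_ge0 f_range fibre_le.
have -> : \sum_(y in X) F (f y) = \sum_(y in X) \sum_(lo <= c < hi) (if c == f y then F c else 0).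
  by apply: eq_bigr => y /f_range range_y; rewrite -big_mkcond big_nat1_eq range_y.
rewrite exchange_big mulr_sumr ler_sum // => c _.
rewrite -big_mkcondr (eq_bigl (mem [set y in X | f y == c])) => [|y]; last by rewrite !inE eq_sym.
by rewrite sumr_const -(mulr_natl (F c)); apply: ler_wpM2r; rewrite ?ler_nat.
Qed.

End FibreSums.

Section GcdOverMax.
Local Open Scope ring_scope.
Variables (R : numFieldType) (n : nat).

(* gcd(a, c) / max(a, c) is charged to the larger of a and c, where it is bounded by the sum of
   all common divisors. *)
Let psi (a c : nat) : R := ((c <= a) * common_divisor_sum n a c)%N%:R / a%:R.

Let psi_ge0 a c : 0 <= psi a c.
Proof. by rewrite divr_ge0 ?ler0n. Qed.

Lemma gcdn_over_maxn_le (a c : nat) : (0 < a < n)%N -> (0 < c < n)%N ->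
  (gcdn a c)%:R / (maxn a c)%:R <= psi a c + psi c a.
Proof.
move=> a_range c_range; have [c_le_a | a_lt_c] := leqP c a.
- apply: (@le_trans _ _ (psi a c)); first rewrite /psi c_le_a mul1n.
    by apply: ler_wpM2r; rewrite ?invr_ge0 ?ler0n // ler_nat gcdn_le_common_divisor_sum.
  by rewrite lerDl psi_ge0.
- apply: (@le_trans _ _ (psi c a)); first rewrite /psi (ltnW a_lt_c) mul1n.
    by apply: ler_wpM2r; rewrite ?invr_ge0 ?ler0n // ler_nat gcdnC gcdn_le_common_divisor_sum.
  by rewrite lerDr psi_ge0.
Qed.

Lemma sum_psi (a : nat) : (0 < a < n)%N -> \sum_(1 <= c < n) psi a c = (divisor_count n a)%:R.
Proof.
move=> /andP[a_gt0 a_lt]; rewrite -mulr_suml -natr_sum.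
have -> : (\sum_(1 <= c < n) (c <= a) * common_divisor_sum n a c =
           \sum_(1 <= c < a.+1) common_divisor_sum n a c)%N.
  rewrite (big_nat_widen _ _ _ _ _ a_lt) big_mkcondr /=.
  by apply: eq_bigr => c _; rewrite ltnS; case: (c <= a)%N; rewrite ?mul1n.
rewrite sum_common_divisor_sum natrM.
by rewrite mulrC mulKf // pnatr_eq0 -lt0n.
Qed.

Lemma sum_gcdn_over_maxn (T : finType) (X : {set T}) (f : T -> nat) :
  {in X, forall y, (0 < f y < n)%N} -> (forall c, #|[set y in X | f y == c]| <= 2)%N ->
  \sum_(y in X) \sum_(z in X) (gcdn (f y) (f z))%:R / (maxn (f y) (f z))%:R <=
    8%:R * (\sum_(1 <= d < n) n.-1 %/ d)%:R :> R.
Proof.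
move=> f_range fibre_le2.
apply: (@le_trans _ _ (\sum_(y in X) \sum_(z in X) (psi (f y) (f z) + psi (f z) (f y)))).
  by apply: ler_sum => y y_in; apply: ler_sum => z z_in; apply: gcdn_over_maxn_le; apply: f_range.
have -> : \sum_(y in X) \sum_(z in X) (psi (f y) (f z) + psi (f z) (f y)) =
    2%:R * \sum_(y in X) \sum_(z in X) psi (f y) (f z).
  under eq_bigr do rewrite big_split /=.
  by rewrite big_split /= [X in _ + X]exchange_big mulr_natl mulr2n.
have divisor_count_ge0 a : 0 <= (divisor_count n a)%:R :> R by rewrite ler0n.
apply: (@le_trans _ _ (2%:R * \sum_(y in X) 2%:R * (divisor_count n (f y))%:R)).
  rewrite ler_pM2l ?ltr0n //; apply: ler_sum => y /f_range y_range.
  by rewrite -sum_psi //; apply: sum_le_fibres.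
rewrite -mulr_sumr mulrA.
have := sum_le_fibres (F := fun a => (divisor_count n a)%:R : R)
  divisor_count_ge0 f_range fibre_le2.
rewrite -[X in _ <= _ * X]natr_sum sum_divisor_count => sum_le.
set D := (\sum_(1 <= d < n) _)%:R in sum_le *.
have -> : 8%:R * D = 2%:R * 2%:R * (2%:R * D) :> R by rewrite !mulrA -!natrM.
by rewrite ler_pM2l // mulr_gt0 ?ltr0n.
Qed.

End GcdOverMax.

Section Logarithm.
Local Open Scope ring_scope.

Lemma ln_le_subr1 (x : R) : 0 < x -> ln x <= x - 1.
Proof.
move=> x_gt0; have := exp_ineq1_le (ln x); rewrite exp_ln; last exact/RltP.
by move/RleP; rewrite RplusE R1E; lra.
Qed.

Lemma inv_succ_le_ln (n : nat) : (0 < n)%N -> n.+1%:R^-1 <= ln n.+1%:R - ln n%:R :> R.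
Proof.
move=> n_gt0; have x_gt0 : 0 < n%:R :> R by rewrite ltr0n.
have y_gt0 : 0 < n.+1%:R :> R by rewrite ltr0n.
have := ln_le_subr1 (divr_gt0 x_gt0 y_gt0).
rewrite -RdivE ?lt0r_neq0 // ln_mult ?ln_Rinv; try exact/RltP;
  last by apply/RltP; rewrite invr_gt0.
rewrite RplusE RoppE RdivE ?lt0r_neq0 // (_ : n%:R / n.+1%:R - 1 = - n.+1%:R^-1).
  by move: (ln _) (ln _) (_^-1) => a b c; lra.
by move: (lt0r_neq0 y_gt0); rewrite mulrSr => y_neq0; field.
Qed.

Lemma harmonic_le_ln (n : nat) : (0 < n)%N ->
  \sum_(1 <= d < n.+1) d%:R^-1 <= 1 + ln n%:R :> R.
Proof.
elim: n => [//|[|n] IH] _.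
  by rewrite big_nat1 invr1 -R1E ln_1 R0E addr0.
rewrite big_nat_recr //=; have := IH isT; have := inv_succ_le_ln (ltn0Sn n).
by move: (\sum_(_ <= _ < _) _) (ln _) (ln _) (_^-1) => h a b c; lra.
Qed.

Lemma ler_ln_nat (m n : nat) : (0 < m <= n)%N -> ln m%:R <= ln n%:R :> R.
Proof.
case/andP=> m_gt0; rewrite leq_eqVlt => /predU1P[-> // | m_lt_n].
by apply/ltW/RltP/ln_increasing; apply/RltP; rewrite ?ltr0n ?ltr_nat.
Qed.

Lemma sum_divn_le_ln (U : nat) : (2 <= U)%N ->
  (\sum_(1 <= d < U) U.-1 %/ d)%:R <= 3%:R * (U%:R * ln U%:R) :> R.
Proof.
move=> U_ge2; have U_gt0 : (0 < U)%N by apply: ltnW.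
have half_le : 2^-1 <= ln U%:R :> R.
  apply: le_trans (ler_ln_nat (_ : 0 < 2 <= U)%N) => //.
  by apply/ltW/RltP; rewrite (_ : 2%:R = IZR 2) //; exact: ln_lt_2.
rewrite natr_sum; apply: (@le_trans _ _ (U%:R * \sum_(1 <= d < U) d%:R^-1)).
  rewrite mulr_sumr; apply: ler_sum_nat => d /andP[d_gt0 _].
  rewrite ler_pdivlMr ?ltr0n // -natrM ler_nat.
  by apply: leq_trans (leq_divM _ _) (leq_pred _).
have U1_gt0 : (0 < U.-1)%N by rewrite -ltnS prednK.
have harmonic := harmonic_le_ln U1_gt0; rewrite prednK // in harmonic.
have ln_pred_le : ln U.-1%:R <= ln U%:R :> R by rewrite ler_ln_nat // U1_gt0 leq_pred.
apply: le_trans (ler_wpM2l (ler0n _ U) harmonic) _.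
rewrite mulrCA; apply: ler_wpM2l; first exact: ler0n.
by move: (ln _) (ln _) half_le ln_pred_le => a b; lra.
Qed.

End Logarithm.

Lemma card_triple (A B C : finType) (P : A -> B -> C -> bool) :
  #|[set q : A * B * C | P q.1.1 q.1.2 q.2]| = (\sum_(b : B) \sum_(c : C) #|[set a | P a b c]|)%N.
Proof.
rewrite -sum1_card big_mkcond /=; under eq_bigr do rewrite inE.
rewrite -(pair_bigA _ (fun ab c => (if P ab.1 ab.2 c then 1 else 0)%N)) /=.
rewrite -(pair_bigA _ (fun a b => \sum_(c : C) (if P a b c then 1 else 0))%N) /=.
rewrite exchange_big; apply: eq_bigr => b _; rewrite exchange_big; apply: eq_bigr => c _.
by rewrite -sum1_card [RHS]big_mkcond; apply: eq_bigr => a _; rewrite !inE.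
Qed.

Section SampleSpace.
Variables (U p m : nat) (X : {set 'I_U}) (x : 'I_U) (a b : nat).

Lemma cond_count_eq : cond_count U p m X x a =
  (#|[set st : 'I_p * 'I_p | hfun p m st.1 st.2 x == a]| * #|X| * #|X|)%N.
Proof.
by rewrite /cond_count -!cardsX; apply: eq_card => -[[st y] z]; rewrite !inE andbA.
Qed.

Lemma joint_count_eq : joint_count U p m X x a b =
  (\sum_(y in X) \sum_(z in X) #|event_set p m x y z a b|)%N.
Proof.
rewrite /joint_count (card_triple (fun (st : 'I_p * 'I_p) (y z : 'I_U) =>
  [&& hfun p m st.1 st.2 x == a, y \in X, z \in X,
      hfun p m st.1 st.2 y == b & hfun p m st.1 st.2 z == b])) /=.
rewrite [RHS]big_mkcond; apply: eq_bigr => y _.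
case: (y \in X); last first.
  by rewrite big1 // => z _; apply: eq_card0 => st; rewrite !inE andbF.
rewrite [RHS]big_mkcond; apply: eq_bigr => z _.
case: (z \in X); last by apply: eq_card0 => st; rewrite !inE andbF.
by apply: eq_card => st; rewrite !inE.
Qed.

End SampleSpace.

Lemma card_dist_fibre_le2 (U : nat) (X : {set 'I_U}) (x n : nat) :
  (#|[set y in X | `|y - x| == n]| <= 2)%N.
Proof.
have inj : {in [set y in X | `|y - x| == n] &, injective (fun y : 'I_U => x <= y)%N}.
  move=> y1 y2; rewrite !inE => /andP[_ /eqP d1] /andP[_ /eqP d2] le_eq; apply: ord_inj.
  by case: (leqP x y1) le_eq => ?; case: (leqP x y2) => ? //= _; lia.
by rewrite -(card_in_imset inj) (leq_trans (max_card _)) ?card_bool.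
Qed.

Section ConditionalBound.
Local Open Scope ring_scope.

Lemma card_event_set_ratio (U p m x y z a b : nat) :
  prime p -> (4 * U ^ 2 < p)%N -> (0 < m)%N -> (m <= U)%N ->
  (x < U)%N -> (y < U)%N -> (z < U)%N -> y != x ->
  #|event_set p m x y z a b|%:R <= (p * #|residue_class p m a|)%N%:R *
    ((m%:R * m%:R)^-1 +
     2%:R * ((gcdn `|y - x| `|z - x|)%N%:R / (maxn `|y - x| `|z - x|)%N%:R) / m%:R) :> R.
Proof.
move=> p_prime p_large m_gt0 m_le x_lt y_lt z_lt y_neq_x.
set M := maxn _ _; set G := gcdn _ _.
have key : (m ^ 2 * M * #|event_set p m x y z a b| <=
    p * #|residue_class p m a| * (M + 2 * m * G))%N.
  rewrite /M /G; case: (leqP (`|z - x|)%N (`|y - x|)%N) => [dz_le | dy_lt].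
  - exact: (card_event_set a b p_prime p_large m_gt0 m_le x_lt y_lt).
  - rewrite event_setC gcdnC.
    by apply: (card_event_set a b p_prime p_large m_gt0 m_le x_lt z_lt); [apply/eqP; lia | lia].
have M_gt0 : (0 < M)%N by rewrite /M; move/eqP: y_neq_x; lia.
have -> : (m%:R * m%:R)^-1 + 2%:R * (G%:R / M%:R) / m%:R =
    (M + 2 * m * G)%N%:R / (m ^ 2 * M)%N%:R :> R.
  by rewrite !natrD !natrM ?natrX; field; rewrite !pnatr_eq0 -!lt0n m_gt0 M_gt0.
rewrite mulrA ler_pdivlMr ?ltr0n ?muln_gt0 ?expn_gt0 ?m_gt0 ?M_gt0 //.
by rewrite -!natrM ler_nat mulnC.
Qed.

Lemma sum_gcd_dist_le (U : nat) (X : {set 'I_U}) (x : 'I_U) : x \notin X -> (2 <= U)%N ->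
  \sum_(y in X) \sum_(z in X)
     (gcdn `|y - x| `|z - x|)%N%:R / (maxn `|y - x| `|z - x|)%N%:R <= 24%:R * (U%:R * ln U%:R) :> R.
Proof.
move=> x_notin U_ge2.
have dist_range : {in X, forall y : 'I_U, (0 < `|y - x| < U)%N}.
  move=> y y_in; have : nat_of_ord y != x by apply: contraNneq x_notin => /ord_inj <-.
  by move/eqP; have := ltn_ord y; have := ltn_ord x; lia.
apply: le_trans (sum_gcdn_over_maxn _ dist_range (card_dist_fibre_le2 X x)) _.
rewrite (_ : 24%:R = 8%:R * 3%:R :> R); last by rewrite -natrM.
by rewrite -mulrA ler_wpM2l ?ler0n ?sum_divn_le_ln.
Qed.

Lemma joint_count_le (U p m : nat) (X : {set 'I_U}) (x : 'I_U) (a b : nat) :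
  prime p -> (4 * U ^ 2 < p)%N -> (0 < m)%N -> (m <= U)%N -> x \notin X -> (2 <= U)%N ->
  (joint_count U p m X x a b)%:R <= (p * #|residue_class p m a|)%N%:R *
    (#|X|%:R * #|X|%:R / (m%:R * m%:R) + 2%:R / m%:R * (24%:R * (U%:R * ln U%:R))) :> R.
Proof.
move=> p_prime p_large m_gt0 m_le x_notin U_ge2.
have neq_x y : y \in X -> y != x by apply: contraTneq => ->.
rewrite joint_count_eq natr_sum; under eq_bigr do rewrite natr_sum.
apply: le_trans (ler_sum _ (fun y y_in => ler_sum _ (fun z _ =>
  card_event_set_ratio a b p_prime p_large m_gt0 m_le (ltn_ord x) (ltn_ord y) (ltn_ord z)
    (neq_x y y_in)))) _.
set c := (p * _)%N%:R; set al := (m%:R * m%:R)^-1.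
have split_term t : c * (al + 2%:R * t / m%:R) = c * al + c * 2%:R / m%:R * t by ring.
under eq_bigr => y _ do under eq_bigr => z _ do rewrite split_term.
under eq_bigr => y _ do rewrite big_split /= sumr_const -mulr_sumr.
rewrite big_split /= sumr_const -mulr_sumr.
rewrite (_ : c * al *+ #|X| *+ #|X| = c * (#|X|%:R * #|X|%:R * al)); last first.
  by rewrite -(mulr_natr (c * al)) -(mulr_natr (c * al * _)); ring.
rewrite [X in _ <= X]mulrDr lerD2l -!mulrA; apply: ler_wpM2l; first exact: ler0n.
apply: ler_wpM2l; first exact: ler0n.
by apply: ler_wpM2l; [rewrite invr_ge0 ler0n | exact: sum_gcd_dist_le].
Qed.

End ConditionalBound.

Theorem theorem11p2 :
  exists C : R,
  forall (U : nat) (X : {set 'I_U}) (p m : nat) (x : 'I_U) (a b : 'I_m),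
    prime p -> (4 * U ^ 2 < p)%N -> (0 < m)%N -> (m <= U)%N ->
    x \notin X -> (0 < #|X|)%N ->
    Rle (cond_prob U p m X x a b)
        (Rplus (Rdiv 1 (Rmult (INR m) (INR m)))
               (Rdiv (Rmult C (Rmult (INR U) (ln (INR U))))
                     (Rmult (INR m) (Rmult (INR #|X|) (INR #|X|))))).
Proof.
(* 48 = 2 * 24: the factor 2/m of the pair bound times the constant of sum_gcd_dist_le. *)
exists (48%:R)%R => U X p m x a b p_prime p_large m_gt0 m_le x_notin X_gt0.
have [y y_in] : exists y, y \in X by apply/set0Pn; rewrite -card_gt0.
have U_ge2 : (2 <= U)%N.
  have x_neq_y : x != y by apply: contraNneq x_notin => ->.
  by have := max_card [set x; y]; rewrite cards2 x_neq_y card_ord.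
have A_gt0 : (0 < #|residue_class p m a|)%N.
  have a_lt_p : (a < p)%N by move: (ltn_ord a); nia.
  by apply/card_gt0P; exists (Ordinal a_lt_p); rewrite inE /= modn_small.
apply/RleP; rewrite /cond_prob cond_count_eq card_hash_fibre ?prime_gt0 //.
rewrite !RdivE !RplusE !RmultE !INRE R1E.
rewrite ler_pdivrMr; last by rewrite ltr0n !muln_gt0 prime_gt0 ?A_gt0 ?X_gt0.
apply: le_trans (joint_count_le a b p_prime p_large m_gt0 m_le x_notin U_ge2) _.
have m_neq0 : (m%:R != 0 :> R)%R by rewrite pnatr_eq0 -lt0n.
have X_neq0 : (#|X|%:R != 0 :> R)%R by rewrite pnatr_eq0 -lt0n.
by rewrite le_eqVlt; apply/orP; left; apply/eqP; rewrite !natrM; field; rewrite m_neq0 X_neq0.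
Qed.
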